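(* Let $\mathcal H$ be as in the context, a graded algebra satisfying axioms ($m0$)–($m3$). Then for $f\in C\subseteq P_n$ and $g\in C'\subseteq P_m$ ($C,C'$ connected components), $$M_f\cdot M_g=\sum_{h\in P_{n+m}}|A^h_{f,g}|\,M_h,$$ where $A^h_{f,g}$ is the set of $\zeta\in Sh(C,C')$ such that $\zeta(f,g)\le h$ and such that, whenever $f'\ge f$ in $C$ and $g'\ge g$ in $C'$ satisfy $\zeta(f',g')\le h$, we have $f'=f$ and $g'=g$. In particular the structure constants are nonnegative integers.
   Context: For each $n\ge0$ let $P_n$ be a finite poset; connected components of $P_n$ are those of its Hasse diagram. $\mathcal H=\bigoplus_n\mathcal H_n$ is a graded vector space with $\mathcal H_n$ having basis $\{F_f:f\in P_n\}$, and the basis $\{M_f\}$ is defined by $F_f=\sum_{g\in P_n,\,g\ge f}M_g$. A shuffle on components $C\subseteq P_n$, $C'\subseteq P_m$ is a function $\zeta:C\times C'\to P_{n+m}$. Assume that for each ordered pair of components $(C,C')$ there is a set $Sh(C,C')$ of shuffles such that: ($m0$) any two elements in the same connected component of $P_n$ have a least upper bound $\vee$; ($m1$) $\mathcal H$ is an algebra and $F_fF_g=\sum_{\zeta\in Sh(C,C')}F_{\zeta(f,g)}$ for $f\in C$, $g\in C'$; ($m2$) for $f\le f'$ in $C$, $g\le g'$ in $C'$ and $\zeta\in Sh(C,C')$, $\zeta(f,g)\le\zeta(f',g')$; ($m3$) for $f_1,f_2\in C$, $g_1,g_2\in C'$ and $\zeta\in Sh(C,C')$, $\zeta(f_1\vee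 f_2,g_1\vee g_2)\le\zeta(f_1,g_1)\vee\zeta(f_2,g_2)$. *)

From HB Require Import structures.
From mathcomp Require Import all_boot all_order all_algebra.
Set Implicit Arguments. Unset Strict Implicit. Unset Printing Implicit Defensive.
Import Order.TTheory GRing.Theory.

Local Open Scope order_scope.

Section PosetDefs.
Context {disp : Order.disp_t} {T : finPOrderType disp}.

Definition covers (x y : T) : bool :=
  (x < y) && [forall z : T, ~~ ((x < z) && (z < y))].

Definition hasse_adj : rel T := fun x y => covers x y || covers y x.

Definition hcomp (x : T) : {set T} := [set y | connect hasse_adj x y].

Definition is_lub (x y z : T) : Prop :=
  [/\ x <= z, y <= z & forall w : T, x <= w -> y <= w -> z <= w].

End PosetDefs.

Definition Aset {d : Order.disp_t} (P : nat -> finPOrderType d) (n m : nat)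
  (sh : {set {ffun P n * P m -> P (n + m)}}) (f : P n) (g : P m) (h : P (n + m))
  : {set {ffun P n * P m -> P (n + m)}} :=
  [set z in sh | (z (f, g) <= h) &&
     [forall f' : P n, forall g' : P m,
        [&& f' \in hcomp f, g' \in hcomp g, f <= f', g <= g' & z (f', g') <= h]
        ==> (f' == f) && (g' == g)]].

From HB Require Import structures.
From mathcomp Require Import all_boot all_order all_algebra.
Import Order.TTheory GRing.Theory.
Set Implicit Arguments. Unset Strict Implicit.

(* For a pair p0 = (f0, g0), sum the claimed identity over all pairs above p0.
   The left-hand sides add up to F_{f0} * F_{g0}, which (m1) and F = sum M
   rewrite as the sum over shuffles z and over h >= z(f0, g0) of M_h.  On the
   right, each shuffle z with z(f0, g0) <= h is counted exactly once: it lies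
   in A^h_p for the unique maximal pair p >= p0 that z sends below h
   (existence: finiteness; uniqueness: join two candidates using (m0), (m2),
   (m3)).  So both sides have equal sums over every principal upper set of the
   product poset P_n x P_m, and a Moebius-type inversion on that finite poset
   gives the identity itself. *)

Section FinitePoset.
Context {disp : Order.disp_t} {T : finPOrderType disp}.
Local Open Scope order_scope.

Definition up_size (x : T) : nat := #|[set z | x < z]|.

Lemma up_size_lt (x y : T) : x < y -> (up_size y < up_size x)%N.
Proof.
move=> lt_xy; apply: proper_card; apply/properP; split.
  by apply/subsetP => z; rewrite !inE; apply: lt_trans.
by exists y; rewrite !inE ?lt_xy ?ltxx.
Qed.

(* Every nonempty subset of a finite poset has a maximal element: take one
   whose strict upper set is smallest. *)
Lemma exists_maximal (Q : pred T) (x0 : T) :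
  Q x0 -> exists2 x, Q x & forall y, Q y -> x <= y -> y = x.
Proof.
move=> Qx0; case: (arg_minnP up_size Qx0) => x Qx xmin.
exists x => // y Qy le_xy; apply/eqP; apply: contraT => ne_yx.
have lt_xy : x < y by rewrite lt_neqAle eq_sym ne_yx le_xy.
by have := leq_trans (up_size_lt lt_xy) (xmin y Qy); rewrite ltnn.
Qed.

Lemma upper_sums_vanish (V : zmodType) (D : T -> V) :
  (forall x0, (\sum_(x | (x0 <= x)%O) D x)%R = 0%R) -> forall x, D x = 0%R.
Proof.
move=> Dsum x; apply/eqP; apply: contraT => Dx.
have [y Dy ymax] := exists_maximal (Q := fun y => D y != 0%R) Dx.
have := Dsum y; rewrite (bigD1 y) //= big1 ?addr0 => [Dy0|z /andP[le_yz ne_zy]].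
  by rewrite Dy0 eqxx in Dy.
by apply/eqP; apply: contraNT ne_zy => Dz; rewrite (ymax z Dz le_yz).
Qed.

End FinitePoset.

Lemma exists_minimal {disp : Order.disp_t} {T : finPOrderType disp}
    (Q : pred T) (x0 : T) :
  Q x0 -> exists2 x, Q x & forall y, Q y -> (y <= x)%O -> y = x.
Proof. exact: (exists_maximal (T := T^d)). Qed.

Section HasseComponents.
Context {disp : Order.disp_t} {T : finPOrderType disp}.
Local Open Scope order_scope.

Lemma hasse_adj_sym : symmetric (@hasse_adj disp T).
Proof. by move=> x y; rewrite /hasse_adj orbC. Qed.

(* Comparable elements are joined by a chain of covering relations: a minimal
   element strictly between x and y covers x, and is closer to y. *)
Lemma le_connect (x y : T) : x <= y -> connect hasse_adj x y.
Proof.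
move: {2}(up_size x) (leqnn (up_size x)) => k; elim: k x => [|k IH] x.
  rewrite leqn0 => /eqP/cards0_eq up0 le_xy.
  suff -> : x = y by [].
  apply/eqP; apply: contraT => ne_xy.
  have : y \in [set z | x < z] by rewrite inE lt_neqAle ne_xy le_xy.
  by rewrite up0 inE.
move=> up_x; rewrite le_eqVlt => /orP[/eqP <- // | lt_xy].
have [z /andP[lt_xz le_zy] zmin] :=
  exists_minimal (Q := fun z => (x < z) && (z <= y)) (introT andP (conj lt_xy (lexx y))).
have cov_xz : covers x z.
  rewrite /covers lt_xz; apply/forallP => w; apply/negP => /andP[lt_xw lt_wz].
  have := zmin w; rewrite lt_xw (le_trans (ltW lt_wz) le_zy) (ltW lt_wz).
  by move=> /(_ isT isT) eq_wz; rewrite eq_wz ltxx in lt_wz.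
apply: connect_trans (connect1 (_ : hasse_adj x z)) (IH z _ le_zy).
  by rewrite /hasse_adj cov_xz.
by rewrite -ltnS; apply: leq_trans (up_size_lt lt_xz) up_x.
Qed.

Lemma le_hcomp (x y : T) : x <= y -> y \in hcomp x.
Proof. by rewrite inE; apply: le_connect. Qed.

Lemma hcomp_eq (x y : T) : y \in hcomp x -> hcomp y = hcomp x.
Proof.
rewrite inE => cxy; apply/setP => w; rewrite !inE.
by rewrite (same_connect (sym_connect_sym hasse_adj_sym) cxy).
Qed.

Lemma hcomp_common_ub (x y u : T) : x <= u -> y <= u -> y \in hcomp x.
Proof.
move=> le_xu le_yu; rewrite inE (connect_trans (le_connect le_xu)) //.
by rewrite (sym_connect_sym hasse_adj_sym) le_connect.
Qed.

Lemma hcomp_common_lb (x y w : T) : w <= x -> w <= y -> y \in hcomp x.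
Proof. by move=> le_wx le_wy; rewrite (hcomp_eq (le_hcomp le_wx)) le_hcomp. Qed.

End HasseComponents.

Section AsetCharacterization.
Context {d : Order.disp_t} (P : nat -> finPOrderType d).
Local Open Scope order_scope.

Lemma AsetP (n m : nat)
    (S : {set {ffun P n * P m -> P (n + m)%N}}) (f : P n) (g : P m)
    (h : P (n + m)%N) (z : {ffun P n * P m -> P (n + m)%N}) :
  reflect [/\ z \in S, z (f, g) <= h &
           forall f' g', f <= f' -> g <= g' -> z (f', g') <= h -> f' = f /\ g' = g]
          (z \in Aset S f g h).
Proof.
rewrite inE; apply: (iffP and3P) => [[zS zh /forallP zmax] | [zS zh zmax]].
  split=> // f' g' le_ff' le_gg' z'h.
  move: (zmax f') => /forallP/(_ g')/implyP.
  by rewrite !le_hcomp // le_ff' le_gg' z'h => /(_ isT) /andP[/eqP-> /eqP->].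
split=> //; apply/forallP => f'; apply/forallP => g'.
apply/implyP => /and5P[_ _ le_ff' le_gg' z'h].
by have [-> ->] := zmax f' g' le_ff' le_gg' z'h; rewrite !eqxx.
Qed.

End AsetCharacterization.

Local Open Scope ring_scope.

Unset Implicit Arguments.
Section StructureConstants.
Variables (d : Order.disp_t) (P : nat -> finPOrderType d)
  (K : fieldType) (A : algType K) (F M : forall n : nat, P n -> A)
  (Sh : forall n m : nat, {set P n} -> {set P m} ->
          {set {ffun P n * P m -> P (n + m)%N}}).
Hypothesis FM : forall n (f : P n), F n f = \sum_(g : P n | (f <= g)%O) M n g.
Hypothesis m0 : forall n (x y : P n), y \in hcomp x -> exists z, is_lub x y z.
Hypothesis m1 : forall n m (f : P n) (g : P m),
  F n f * F m g = \sum_(z in Sh n m (hcomp f) (hcomp g)) F (n + m)%N (z (f, g)).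
Hypothesis m2 : forall n m (f0 : P n) (g0 : P m) z, z \in Sh n m (hcomp f0) (hcomp g0) ->
  forall f f' g g', f \in hcomp f0 -> f' \in hcomp f0 -> g \in hcomp g0 -> g' \in hcomp g0 ->
  (f <= f')%O -> (g <= g')%O -> (z (f, g) <= z (f', g'))%O.
Hypothesis m3 : forall n m (f0 : P n) (g0 : P m) z, z \in Sh n m (hcomp f0) (hcomp g0) ->
  forall f1 f2 g1 g2, f1 \in hcomp f0 -> f2 \in hcomp f0 ->
    g1 \in hcomp g0 -> g2 \in hcomp g0 ->
  forall a b c, is_lub f1 f2 a -> is_lub g1 g2 b ->
    is_lub (z (f1, g1)) (z (f2, g2)) c -> (z (a, b) <= c)%O.
Variables n m : nat.
Set Implicit Arguments.

Local Notation pair := (P n *p P m).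

Definition Sh_at (p : pair) := Sh n m (hcomp p.1) (hcomp p.2).

Definition Aset_at (p : pair) (h : P (n + m)%N) := Aset (Sh_at p) p.1 p.2 h.

Definition expansion (p : pair) : A :=
  \sum_(h : P (n + m)%N) (#|Aset_at p h|)%:R *: M (n + m)%N h.

(* Pairs above p0 lie in the same components, hence have the same shuffles. *)
Lemma Sh_at_le (p0 p : pair) : (p0 <= p)%O -> Sh_at p = Sh_at p0.
Proof.
rewrite leEprod => /andP[le1 le2].
by rewrite /Sh_at (hcomp_eq (le_hcomp le1)) (hcomp_eq (le_hcomp le2)).
Qed.

Lemma shuffle_mono (p0 p q : pair) z :
  z \in Sh_at p0 -> p.1 \in hcomp p0.1 -> p.2 \in hcomp p0.2 ->
  (p <= q)%O -> (z p <= z q)%O.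
Proof.
case: p q => [f g] [f' g'] zS /= f0f g0g; rewrite leEprod => /andP[/= le_ff' le_gg'].
apply: (m2 _ _ _ _ _ zS) => //; rewrite -?(hcomp_eq f0f) -?(hcomp_eq g0g) le_hcomp //.
Qed.

(* A shuffle lies in at most one set A^h_{f,g} with (f, g) ranging over a
   product of components: join the two candidate pairs and use (m0), (m2), (m3). *)
Lemma Aset_at_unique (p1 p2 : pair) h z :
  p2.1 \in hcomp p1.1 -> p2.2 \in hcomp p1.2 ->
  z \in Aset_at p1 h -> z \in Aset_at p2 h -> p1 = p2.
Proof.
case: p1 p2 => [f1 g1] [f2 g2] /= f12 g12.
move=> /AsetP[zS z1h max1] /AsetP[_ z2h max2].
have [a lub_a] := m0 _ _ _ f12; have [b lub_b] := m0 _ _ _ g12.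
have [f1a f2a _] := lub_a; have [g1b g2b _] := lub_b.
have f1f1 : f1 \in hcomp f1 by apply: le_hcomp.
have g1g1 : g1 \in hcomp g1 by apply: le_hcomp.
have z1ab : (z (f1, g1) <= z (a, b))%O.
  by apply: (m2 _ _ _ _ _ zS) => //; apply: le_hcomp.
have z2ab : (z (f2, g2) <= z (a, b))%O.
  by apply: (m2 _ _ _ _ _ zS) => //; apply: le_hcomp.
have [c lub_c] := m0 _ _ _ (hcomp_common_ub z1ab z2ab).
have zab_h : (z (a, b) <= h)%O.
  have [_ _ c_min] := lub_c; apply: le_trans _ (c_min h z1h z2h).
  exact: (m3 _ _ _ _ _ zS _ _ _ _ f1f1 f12 g1g1 g12 _ _ _ lub_a lub_b lub_c).
have [a_f1 b_g1] := max1 a b f1a g1b zab_h.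
have [a_f2 b_g2] := max2 a b f2a g2b zab_h.
by rewrite /= in a_f1 b_g1 a_f2 b_g2; rewrite -a_f1 -b_g1 a_f2 b_g2.
Qed.

Lemma Aset_at_exists (p0 : pair) h z :
  z \in Sh_at p0 -> (z p0 <= h)%O -> exists2 p, (p0 <= p)%O & z \in Aset_at p h.
Proof.
move=> zS zh.
have [p /andP[le0p zph] pmax] := exists_maximal
  (Q := fun p : pair => (p0 <= p)%O && (z p <= h)%O) (introT andP (conj (lexx p0) zh)).
exists p => //; apply/AsetP; case: p le0p zph pmax => f g le0p zph pmax.
split=> //; first by rewrite (Sh_at_le le0p).
move=> f' g' le_f' le_g' z'h.
have le_p : ((f, g) <= (f', g') :> pair)%O by rewrite leEprod le_f' le_g'.
have := pmax (f', g'); rewrite /= (le_trans le0p le_p) z'h le_p.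
by move=> /(_ isT isT) [-> ->].
Qed.

Lemma Aset_at_below (p0 p : pair) h z :
  (p0 <= p)%O -> z \in Aset_at p h -> z \in Sh_at p0 /\ (z p0 <= h)%O.
Proof.
case: p => f g le0p /AsetP[zS zh _]; rewrite (Sh_at_le le0p) in zS.
split=> //; apply: le_trans _ zh; apply: (shuffle_mono zS) => //; exact: le_hcomp.
Qed.

Lemma count_Aset_at (p0 : pair) h z :
  (\sum_(p | (p0 <= p)%O) (z \in Aset_at p h))%N = (z \in Sh_at p0) && (z p0 <= h)%O.
Proof.
have [/andP[zS zh] | not_below] := boolP ((z \in Sh_at p0) && (z p0 <= h)%O).
  have [p le0p zA] := Aset_at_exists zS zh.
  rewrite (bigD1 p le0p) zA big1 // => q /andP[le0q ne_qp].
  apply/eqP; rewrite eqb0; apply: contra ne_qp => zAq; apply/eqP.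
  move: le0q le0p; rewrite !leEprod => /andP[le1q le2q] /andP[le1p le2p].
  exact: Aset_at_unique (hcomp_common_lb le1q le1p) (hcomp_common_lb le2q le2p) zAq zA.
rewrite big1 // => q le0q; apply/eqP; rewrite eqb0; apply: contra not_below => zAq.
by have [-> ->] := Aset_at_below le0q zAq.
Qed.

Lemma sum_card_Aset_at (p0 : pair) h :
  (\sum_(p | (p0 <= p)%O) #|Aset_at p h|)%N = #|[set z in Sh_at p0 | (z p0 <= h)%O]|.
Proof.
under eq_bigr => p _ do rewrite -sum1_card big_mkcond /=.
rewrite exchange_big /= -sum1_card [RHS]big_mkcond /=; apply: eq_bigr => z _.
by rewrite inE; exact: count_Aset_at.
Qed.

(* Summing M_f * M_g over all pairs above p0 gives F_{f0} * F_{g0}; expanding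
   this product by (m1) and regrouping with the double count above gives the
   same sum of the claimed expansions. *)
Lemma upper_sum_expansion (p0 : pair) :
  \sum_(p | (p0 <= p)%O) M n p.1 * M m p.2 = \sum_(p | (p0 <= p)%O) expansion p.
Proof.
have -> : \sum_(p | (p0 <= p)%O) M n p.1 * M m p.2 = F n p0.1 * F m p0.2.
  rewrite !FM big_distrlr /= pair_big_dep /=.
  by apply: eq_bigl => p; rewrite leEprod.
case: p0 => f0 g0 /=; rewrite m1.
rewrite (eq_bigr (fun z : {ffun P n * P m -> P (n + m)%N} =>
  \sum_(h | (z (f0, g0) <= h)%O) M (n + m)%N h));
  last by move=> z _; rewrite FM.
rewrite (exchange_big_dep xpredT) //=.
under [RHS]eq_bigr => p _ do rewrite /expansion.
rewrite exchange_big /=; apply: eq_bigr => h _.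
rewrite -scaler_suml -natr_sum sum_card_Aset_at scaler_nat -sumr_const.
by apply: eq_bigl => z; rewrite inE.
Qed.

Lemma M_mul_M (p : pair) : M n p.1 * M m p.2 = expansion p.
Proof.
apply/eqP; rewrite -subr_eq0; apply/eqP; move: p.
apply: (upper_sums_vanish (D := fun p : pair => M n p.1 * M m p.2 - expansion p)) => p0.
by rewrite sumrB upper_sum_expansion subrr.
Qed.

End StructureConstants.

Unset Implicit Arguments.

Theorem mainTheorem15
  (d : Order.disp_t) (P : nat -> finPOrderType d)
  (K : fieldType) (A : algType K)
  (F M : forall n : nat, P n -> A)
  (Sh : forall n m : nat, {set P n} -> {set P m} ->
          {set {ffun P n * P m -> P (n + m)%N}})
  (* {F_f : n >= 0, f in P_n} is a basis of H = A (free and spanning) *)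
  (Ffree : forall (s : seq {n : nat & P n}) (c : {n : nat & P n} -> K),
      uniq s -> \sum_(p <- s) c p *: F (tag p) (tagged p) = 0 ->
      forall p, p \in s -> c p = 0)
  (Fspan : forall a : A, exists (s : seq {n : nat & P n}) (c : {n : nat & P n} -> K),
      a = \sum_(p <- s) c p *: F (tag p) (tagged p))
  (* definition of the M basis *)
  (FM : forall n (f : P n), F n f = \sum_(g : P n | (f <= g)%O) M n g)
  (* shuffles are determined by their values on C x C' *)
  (Shfun : forall n m (f : P n) (g : P m) (z1 z2 : {ffun P n * P m -> P (n + m)%N}),
      z1 \in Sh n m (hcomp f) (hcomp g) -> z2 \in Sh n m (hcomp f) (hcomp g) ->
      (forall f' g', f' \in hcomp f -> g' \in hcomp g -> z1 (f', g') = z2 (f', g')) ->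
      z1 = z2)
  (* (m0) *)
  (m0 : forall n (x y : P n), y \in hcomp x -> exists z, is_lub x y z)
  (* (m1) *)
  (m1 : forall n m (f : P n) (g : P m),
      F n f * F m g = \sum_(z in Sh n m (hcomp f) (hcomp g)) F (n + m)%N (z (f, g)))
  (* (m2) *)
  (m2 : forall n m (f0 : P n) (g0 : P m) z, z \in Sh n m (hcomp f0) (hcomp g0) ->
      forall f f' g g', f \in hcomp f0 -> f' \in hcomp f0 -> g \in hcomp g0 -> g' \in hcomp g0 ->
      (f <= f')%O -> (g <= g')%O -> (z (f, g) <= z (f', g'))%O)
  (* (m3) *)
  (m3 : forall n m (f0 : P n) (g0 : P m) z, z \in Sh n m (hcomp f0) (hcomp g0) ->
      forall f1 f2 g1 g2, f1 \in hcomp f0 -> f2 \in hcomp f0 ->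
        g1 \in hcomp g0 -> g2 \in hcomp g0 ->
      forall a b c, is_lub f1 f2 a -> is_lub g1 g2 b ->
        is_lub (z (f1, g1)) (z (f2, g2)) c -> (z (a, b) <= c)%O)
  (n m : nat) (f : P n) (g : P m) :
  M n f * M m g =
    \sum_(h : P (n + m)%N) (#|Aset (Sh n m (hcomp f) (hcomp g)) f g h|)%:R *: M (n + m)%N h.
Proof. exact: (M_mul_M FM m0 m1 m2 m3 (f, g)). Qed.
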